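(* Let $k$ be a field of characteristic zero, $h_0\in k\setminus\{0\}$, $\sigma\in\mathrm{Aut}_k(k[h])$ given by $\sigma(h)=h-h_0$, and let $a\in k[h]$ be a polynomial of degree $n>2$ which is reflective, i.e. there is $\rho\in k$ with $a(\rho-h)=(-1)^n a(h)$. Let $A=A(k[h],a,\sigma)$ be the generalized Weyl algebra and let $\Omega$ be the automorphism of $A$ with $\Omega(x)=y$, $\Omega(y)=(-1)^n x$, $\Omega(h)=h_0+\rho-h$. Let $\mathcal G\subset\mathrm{Aut}_k(A)$ be the subgroup generated by the torus automorphisms $\theta_w$ ($w\in k^*$) and the exponential automorphisms $\exp(\lambda\,\mathrm{ad}(x^m))$ and $\exp(\lambda\,\mathrm{ad}(y^m))$ for $\lambda\in k$, $m\geq 1$. Then $\Omega\notin\mathcal G$.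
   Context: For a $k$-algebra $R$, a central element $a\in R$ and $\sigma\in\mathrm{Aut}_k(R)$, the generalized Weyl algebra $A(R,a,\sigma)$ is the $k$-algebra generated by $R$ and two new variables $x,y$ subject to the relations $yx=a$, $xy=\sigma(a)$, $xr=\sigma(r)x$ and $ry=y\sigma(r)$ for all $r\in R$. For $w\in k^*$, $\theta_w$ is the automorphism of $A$ with $\theta_w(x)=wx$, $\theta_w(y)=w^{-1}y$, $\theta_w(h)=h$. For $u\in A$, $\mathrm{ad}(u)(b)=ub-bu$; the derivations $\mathrm{ad}(x^m)$ and $\mathrm{ad}(y^m)$ are locally nilpotent on $A$, so $\exp(\lambda\,\mathrm{ad}(u))=\sum_{i\geq0}\frac{\lambda^i}{i!}\mathrm{ad}(u)^i$ is a well-defined automorphism for $u=x^m$ or $u=y^m$. *)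

From HB Require Import structures.
From mathcomp Require Import all_boot all_order all_algebra.
Set Implicit Arguments. Unset Strict Implicit. Unset Printing Implicit Defensive.
Import GRing.Theory.
Local Open Scope ring_scope.

(* The generalized Weyl algebra A = A(k[h], a, sigma), sigma(h) = h - h0,
   is described by its defining presentation: a k-algebra A with elements
   hA (the image of h), xA, yA satisfying the GWA relations and initial among
   all such data (universal property of "generated by ... subject to ..."). *)

Section GWA.
Variable k : fieldType.

Definition sigma_h (h0 : k) (p : {poly k}) : {poly k} := p \Po ('X - h0%:P).

Definition polyA (A : algType k) (hA : A) (p : {poly k}) : A := horner_alg hA p.

Definition alg_hom (A B : algType k) (f : A -> B) : Prop :=
  [/\ f 1 = 1, forall u v, f (u + v) = f u + f v,
      forall u v, f (u * v) = f u * f v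
    & forall (c : k) u, f (c *: u) = c *: f u].

Definition gwa_rel (h0 : k) (a : {poly k}) (B : algType k) (hB xB yB : B) : Prop :=
  [/\ yB * xB = polyA hB a, xB * yB = polyA hB (sigma_h h0 a),
      forall r, xB * polyA hB r = polyA hB (sigma_h h0 r) * xB
    & forall r, polyA hB r * yB = yB * polyA hB (sigma_h h0 r)].

Definition is_gwa (h0 : k) (a : {poly k}) (A : algType k) (hA xA yA : A) : Prop :=
  gwa_rel h0 a hA xA yA /\
  forall (B : algType k) (hB xB yB : B), gwa_rel h0 a hB xB yB ->
    (exists f : A -> B, [/\ alg_hom f, f hA = hB, f xA = xB & f yA = yB]) /\
    (forall f g : A -> B, alg_hom f -> alg_hom g ->
       f hA = g hA -> f xA = g xA -> f yA = g yA -> f =1 g).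

Definition ad (A : algType k) (u b : A) : A := u * b - b * u.

Definition is_exp_ad (A : algType k) (lam : k) (u : A) (s : A -> A) : Prop :=
  forall b : A, exists N : nat, iter N (ad u) b = 0 /\
    s b = \sum_(i < N) ((lam ^+ i) / (i`!)%:R) *: iter i (ad u) b.

Definition is_theta (A : algType k) (hA xA yA : A) (s : A -> A) : Prop :=
  exists w : k, [/\ w != 0, alg_hom s, s xA = w *: xA, s yA = w^-1 *: yA & s hA = hA].

Definition gwa_gen (A : algType k) (hA xA yA : A) (s : A -> A) : Prop :=
  is_theta hA xA yA s \/
  exists (lam : k) (m : nat), (0 < m)%N /\
    (is_exp_ad lam (xA ^+ m) s \/ is_exp_ad lam (yA ^+ m) s).

End GWA.

Inductive in_gen_group (T : Type) (gen : (T -> T) -> Prop) : (T -> T) -> Prop :=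
| gg_id : in_gen_group gen id
| gg_gen : forall s g, gen s -> in_gen_group gen g -> in_gen_group gen (s \o g)
| gg_inv : forall s s' g, gen s -> cancel s s' -> cancel s' s ->
    in_gen_group gen g -> in_gen_group gen (s' \o g).

From HB Require Import structures.
From mathcomp Require Import all_boot all_order all_algebra.
From mathcomp Require Import boolp.
From mathcomp Require Import ring zify.
Import Order.TTheory GRing.Theory Num.Theory.
Set Implicit Arguments. Unset Strict Implicit. Unset Printing Implicit Defensive.
Local Open Scope ring_scope.

(* Only the action of Omega on h matters: we build a linear form phi on A that
   every generator of G fixes, with phi (Omega h) = - phi h != phi h.
   Let A act on functions f : Z -> k by (x f)(i) = f(i-1),
   (y f)(i) = a(i h0) f(i+1) and (h f)(i) = i h0 f(i). Each element then acts as
   f |-> sum_d c_d(i h0) f(i+d) with c_d(h - l h0) divisible by a for 0 <= l < d.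
   Put phi u := L(c_0), where L p is the coefficient of h^2 in F mod a for any F
   with F(h - h0) - F(h) = p. As L kills these differences when a divides F, the
   divisibility of the c_d gives phi (x^m u) = phi (u x^m) and
   phi (y^m u) = phi (u y^m), so exp (lam ad x^m) and exp (lam ad y^m) fix phi;
   theta_w rescales c_d by w^-d and fixes c_0. Finally L 1 = 0 while
   L h = -1/(2 h0) != 0 because deg a >= 3 and k has characteristic 0. *)

Section AlgHom.
Variable k : fieldType.
Implicit Types A B C : algType k.

Lemma alg_hom0 A B (f : A -> B) : alg_hom f -> f 0 = 0.
Proof. by case=> _ fD _ _; apply: (addIr (f 0)); rewrite -fD !add0r. Qed.

Lemma alg_homX A B (f : A -> B) u m : alg_hom f -> f (u ^+ m) = f u ^+ m.
Proof.
case=> f1 _ fM _; elim: m => [|m IH]; first by rewrite !expr0.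
by rewrite !exprS fM IH.
Qed.

Lemma alg_hom_polyA A B (f : A -> B) (hA : A) p :
  alg_hom f -> f (polyA hA p) = polyA (f hA) p.
Proof.
move=> fhom; have [f1 fD fM fZ] := fhom.
elim/poly_ind: p => [|p c IH]; first by rewrite /polyA !rmorph0 alg_hom0.
rewrite /polyA !rmorphD !rmorphM /= !horner_algX !horner_algC.
by rewrite fD fM -!/(polyA _ _) IH fZ f1.
Qed.

Lemma alg_hom_comp A B C (f : B -> C) (g : A -> B) :
  alg_hom f -> alg_hom g -> alg_hom (f \o g).
Proof.
case=> f1 fD fM fZ [g1 gD gM gZ]; split=> /= [|u v|u v|c u].
- by rewrite g1 f1.
- by rewrite gD fD.
- by rewrite gM fM.
- by rewrite gZ fZ.
Qed.

Lemma exp_ad_inv A (phi : A -> k) (phiD : {morph phi : u v / u + v})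
    (phiZ : forall c u, phi (c *: u) = c * phi u) (u : A) (lam : k) (s : A -> A) :
  (forall b, phi (u * b) = phi (b * u)) -> is_exp_ad lam u s ->
  forall b, phi (s b) = phi b.
Proof.
move=> phi_comm s_exp b; have [N [adN ->]] := s_exp b.
have phi0 : phi 0 = 0 by rewrite -(scale0r 0) phiZ mul0r.
have phi_ad v : phi (ad u v) = 0.
  by rewrite /ad phiD -scaleN1r phiZ phi_comm mulN1r addrN.
case: N adN => [|N] adN; first by rewrite big_ord0; move: adN => /= ->.
rewrite big_ord_recl phiD (big_morph phi phiD phi0) big1 ?addr0 => [|i _].
  by rewrite expr0 divr1 scale1r.
by rewrite phiZ lift0 iterS phi_ad mulr0.
Qed.

End AlgHom.

Lemma in_gen_group_inv (T R : Type) (gen : (T -> T) -> Prop) (phi : T -> R) :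
  (forall s, gen s -> forall t, phi (s t) = phi t) ->
  forall g, in_gen_group gen g -> forall t, phi (g t) = phi t.
Proof.
move=> phi_gen g.
elim=> [|s g' /phi_gen phis _ IH|s s' g' /phi_gen phis _ s'K _ IH] t //=.
- by rewrite phis.
- by rewrite -phis s'K IH.
Qed.

(** * Difference calculus on k[h] *)

Section Difference.
Variables (k : fieldType) (h0 : k).
Hypothesis k_char0 : [pchar k] =i pred0.
Hypothesis h0_neq0 : h0 != 0.

Lemma natf_eq0 n : (n%:R == 0 :> k) = (n == 0)%N.
Proof. by move: n; apply/pcharf0P. Qed.

Lemma natf_inj : injective (fun n : nat => n%:R : k).
Proof.
suff le_inj m n : (m <= n)%N -> m%:R = n%:R :> k -> m = n.
  move=> m n /= mn; case: (leqP m n) => [le_mn|/ltnW le_nm]; first exact: le_inj.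
  by rewrite (le_inj _ _ le_nm (esym mn)).
move=> le_mn mn; apply/eqP; rewrite eqn_leq le_mn /= -subn_eq0 -natf_eq0.
by rewrite natrB // mn subrr.
Qed.

Lemma poly_progression_eq0 (e : k) (p : {poly k}) :
  e != 0 -> (forall n : nat, p.[n%:R * e] = 0) -> p = 0.
Proof.
move=> e_neq0 p_root; apply/eqP; apply: contraT => p_neq0.
pose rs := [seq n%:R * e | n <- iota 0 (size p)].
have rs_roots : all (root p) rs by apply/allP => _ /mapP [n _ ->]; apply/rootP.
have rs_uniq : uniq rs.
  by rewrite map_inj_uniq ?iota_uniq // => m n /(mulIf e_neq0)/natf_inj.
by have := max_poly_roots p_neq0 rs_roots rs_uniq; rewrite size_map size_iota ltnn.
Qed.

Definition shiftp (z : int) (p : {poly k}) := p \Po ('X - (z%:~R * h0)%:P).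

Lemma horner_shiftp z p x : (shiftp z p).[x] = p.[x - z%:~R * h0].
Proof. by rewrite horner_comp hornerXsubC. Qed.

Lemma shiftp_add l m p : shiftp l (shiftp m p) = shiftp (l + m) p.
Proof.
rewrite /shiftp -comp_polyA comp_polyB comp_polyX comp_polyC intrD mulrDl.
by congr (_ \Po _); rewrite polyCD; ring.
Qed.

Lemma shiftp_id p : shiftp 0 p = p.
Proof. by rewrite /shiftp mul0r subr0 comp_polyXr. Qed.

Lemma shiftp0 z : shiftp z 0 = 0.
Proof. exact: comp_poly0. Qed.

Lemma shiftpD z p q : shiftp z (p + q) = shiftp z p + shiftp z q.
Proof. exact: comp_polyD. Qed.

Lemma shiftpZ z c p : shiftp z (c *: p) = c *: shiftp z p.
Proof. exact: comp_polyZ. Qed.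

Lemma shiftpM z p q : shiftp z (p * q) = shiftp z p * shiftp z q.
Proof. exact: comp_polyM. Qed.

Lemma shiftpC z c : shiftp z c%:P = c%:P.
Proof. exact: comp_polyC. Qed.

Lemma shiftp_sum z (I : Type) (r : seq I) (P : pred I) (F : I -> {poly k}) :
  shiftp z (\sum_(i <- r | P i) F i) = \sum_(i <- r | P i) shiftp z (F i).
Proof. exact: (big_morph _ (shiftpD z) (shiftp0 z)). Qed.

Lemma sigma_hE p : sigma_h h0 p = shiftp 1 p.
Proof. by rewrite /shiftp mul1r. Qed.

Definition diffp (p : {poly k}) := shiftp 1 p - p.

Lemma diffpD p q : diffp (p + q) = diffp p + diffp q.
Proof. by rewrite /diffp shiftpD opprD addrACA. Qed.

Lemma diffpZ c p : diffp (c *: p) = c *: diffp p.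
Proof. by rewrite /diffp shiftpZ scalerBr. Qed.

Lemma diffpN p : diffp (- p) = - diffp p.
Proof. by rewrite -!scaleN1r diffpZ. Qed.

Lemma diffp_eq0 p : diffp p = 0 -> p = (p.[0])%:P.
Proof.
move=> /eqP; rewrite subr_eq0 => /eqP p_periodic.
have p_step x : p.[x - h0] = p.[x] by rewrite -[in RHS]p_periodic horner_shiftp mul1r.
apply/eqP; rewrite -subr_eq0; apply/eqP; apply: (@poly_progression_eq0 (- h0)).
  by rewrite oppr_eq0.
move=> n; apply/eqP; rewrite hornerD hornerN hornerC subr_eq0; apply/eqP.
by elim: n => [|n IH]; rewrite ?mul0r // -natr1 mulrDl mul1r p_step.
Qed.

Definition rfactp (m : nat) : {poly k} := \prod_(0 <= j < m) ('X + (j%:R * h0)%:P).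

Lemma monic_rfactp m : rfactp m \is monic.
Proof. by apply: monic_prod => j _; rewrite monicXaddC. Qed.

Lemma size_rfactp m : size (rfactp m) = m.+1.
Proof.
rewrite /rfactp (eq_bigr (fun j => 'X - (- (j%:R * h0))%:P)) => [|j _].
  by rewrite size_prod_XsubC size_iota subn0.
by rewrite polyCN opprK.
Qed.

Lemma diffp_rfactp m : diffp (rfactp m.+1) = - (m.+1%:R * h0) *: rfactp m.
Proof.
have shift_factor j : shiftp 1 ('X + (j.+1%:R * h0)%:P) = 'X + (j%:R * h0)%:P.
  rewrite /shiftp comp_polyD comp_polyX comp_polyC -natr1 -polyCN; ring.
rewrite /diffp {1}/rfactp (big_morph _ (shiftpM 1) (shiftpC 1 1)).
rewrite big_nat_recl // [rfactp m.+1]big_nat_recr //=.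
under eq_bigr => j _ do rewrite shift_factor.
rewrite -/(rfactp m) /shiftp comp_polyD comp_polyX comp_polyC mul0r addr0.
rewrite -mul_polyC -natr1 !(polyCN, polyCM, polyCD) polyC1.
ring.
Qed.

Lemma diffp_surj p : exists F, diffp F = p.
Proof.
elim: (size p) {-2}p (leqnn (size p)) => [|s IH] {}p size_p.
  exists 0; move: size_p; rewrite leqn0 size_poly_eq0 => /eqP->.
  by rewrite /diffp shiftp0 subrr.
pose c := p`_s.
have /IH [F dF] : (size (p - c *: rfactp s)%R <= s)%N.
  apply/leq_sizeP => j; rewrite leq_eqVlt coefB coefZ => /orP [/eqP <-|lt_sj].
    have /monicP := monic_rfactp s.
    by rewrite /lead_coef size_rfactp /= => ->; rewrite mulr1 subrr.
  rewrite !nth_default ?mulr0 ?subr0 ?size_rfactp //.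
  exact: leq_trans size_p lt_sj.
have s1_neq0 : - (s.+1%:R * h0) != 0 by rewrite oppr_eq0 mulf_neq0 ?natf_eq0.
exists (F + (c / - (s.+1%:R * h0)) *: rfactp s.+1).
by rewrite diffpD diffpZ diffp_rfactp scalerA divfK // dF subrK.
Qed.

(** * The trace form on k[h] *)

Section TraceForm.
Variable a : {poly k}.
Hypothesis size_a : (3 < size a)%N.

Lemma diffp_surjb p : exists F, diffp F == p.
Proof. by have [F dF] := diffp_surj p; exists F; apply/eqP. Qed.

Definition antidiffp p := xchoose (diffp_surjb p).

Lemma antidiffpK p : diffp (antidiffp p) = p.
Proof. exact/eqP/(xchooseP (diffp_surjb p)). Qed.

(* Independent of the choice of antiderivative: the kernel of [diffp] consists
   of constants, which are reduced modulo [a] and have no h^2 coefficient. *)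
Definition ptrace p := ((antidiffp p) %% a)`_2.

Lemma ptrace_diffp F : ptrace (diffp F) = (F %% a)`_2.
Proof.
rewrite /ptrace.
have /diffp_eq0 : diffp (antidiffp (diffp F) - F) = 0.
  by rewrite diffpD diffpN antidiffpK subrr.
move=> /eqP; rewrite subr_eq => /eqP ->.
rewrite modpD coefD modp_small ?coefC ?add0r //.
exact: leq_ltn_trans (size_polyC_leq1 _) (ltn_trans _ size_a).
Qed.

Lemma ptraceD p q : ptrace (p + q) = ptrace p + ptrace q.
Proof.
by rewrite -{1}(antidiffpK p) -{1}(antidiffpK q) -diffpD ptrace_diffp modpD coefD.
Qed.

Lemma ptraceZ c p : ptrace (c *: p) = c * ptrace p.
Proof. by rewrite -{1}(antidiffpK p) -diffpZ ptrace_diffp modpZl coefZ. Qed.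

Lemma ptraceB p q : ptrace (p - q) = ptrace p - ptrace q.
Proof. by rewrite ptraceD -scaleN1r ptraceZ mulN1r. Qed.

Lemma ptrace_diffp_dvd G : a %| G -> ptrace (diffp G) = 0.
Proof. by case/dvdpP => q ->; rewrite ptrace_diffp modp_mull coef0. Qed.

Lemma ptrace_shiftp (m : nat) G :
  (forall l : nat, (l < m)%N -> a %| shiftp l G) -> ptrace (shiftp m G) = ptrace G.
Proof.
elim: m => [|m IH] dvdG; first by rewrite shiftp_id.
have -> : shiftp m.+1 G = diffp (shiftp m G) + shiftp m G.
  by rewrite /diffp shiftp_add subrK intS.
by rewrite ptraceD ptrace_diffp_dvd ?dvdG // add0r IH // => l /ltnW; apply: dvdG.
Qed.

Lemma ptrace1 : ptrace 1 = 0.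
Proof.
have dX : diffp ((- h0)^-1 *: 'X) = 1.
  rewrite diffpZ /diffp /shiftp comp_polyX addrAC subrr add0r mul1r -polyCN.
  by rewrite -mul_polyC -polyCM mulVf ?oppr_eq0.
rewrite -dX ptrace_diffp modp_small ?coefZ ?coefX ?mulr0 //.
by rewrite (leq_ltn_trans (size_scale_leq _ _)) // size_polyX (ltn_trans _ size_a).
Qed.

Lemma ptraceX : ptrace 'X = - (h0 *+ 2)^-1.
Proof.
have h02_neq0 : h0 *+ 2 != 0 by rewrite -mulr_natr mulf_neq0 ?natf_eq0.
have dX2 : diffp 'X^2 = - (h0 *+ 2) *: 'X + h0 ^+ 2 *: 1.
  rewrite /diffp /shiftp comp_Xn_poly mul1r -!mul_polyC polyCN polyCMn rmorphXn /=.
  ring.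
have := ptrace_diffp 'X^2; rewrite dX2 ptraceD !ptraceZ ptrace1 mulr0 addr0.
rewrite modp_small ?size_polyXn // coefXn eqxx => /(canRL (mulKf _)) -> //.
  by rewrite mulr1 invrN.
by rewrite oppr_eq0.
Qed.

Lemma ptrace_CsubX_neq c : ptrace (c%:P - 'X) != ptrace 'X.
Proof.
rewrite -alg_polyC ptraceB ptraceZ ptrace1 mulr0 sub0r ptraceX opprK.
rewrite -addr_eq0 -mulr2n -mulr_natr mulf_neq0 ?natf_eq0 //.
by rewrite invr_eq0 -mulr_natr mulf_neq0 ?natf_eq0.
Qed.

(** * An operator model of A *)

Definition V := int -> k.
Definition pt (i : int) : k := i%:~R * h0.
Definition delta (j : int) : V := fun i => (i == j)%:R.

Lemma horner_shiftp_pt z p i : (shiftp z p).[pt i] = p.[pt (i - z)].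
Proof. by rewrite horner_shiftp /pt intrB mulrBl. Qed.

Definition wshift_sum (M : seq (int * {poly k})) (f : V) (i : int) : k :=
  \sum_(m <- M) m.2.[pt i] * f (i + m.1).

Definition admissible (M : seq (int * {poly k})) :=
  forall m, m \in M -> forall l : int, 0 <= l < m.1 -> a %| shiftp l m.2.

(* The divisibility condition holds for the coefficient of y^d; it is what makes
   the trace below commute with the powers of x. *)
Definition is_weyl_op (T : V -> V) :=
  exists2 M, admissible M & forall f i, T f i = wshift_sum M f i.

Definition wshift (d : int) (p : {poly k}) (f : V) (i : int) := p.[pt i] * f (i + d).

Lemma is_weyl_op_wshift d p :
  (forall l : int, 0 <= l < d -> a %| shiftp l p) -> is_weyl_op (wshift d p).
Proof.
move=> dvd_p; exists [:: (d, p)] => [m|f i]; last by rewrite /wshift_sum big_seq1.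
by rewrite inE => /eqP ->.
Qed.

Lemma is_weyl_op_wshift_npos d p : d <= 0 -> is_weyl_op (wshift d p).
Proof. by move=> d_le0; apply: is_weyl_op_wshift => l /andP [? ?]; exfalso; lia. Qed.

Lemma wshift_comp d d' p p' f :
  wshift d p (wshift d' p' f) = wshift (d + d') (p * shiftp (- d) p') f.
Proof.
by apply: funext => i; rewrite /wshift hornerM horner_shiftp_pt opprK mulrA addrA.
Qed.

Lemma is_weyl_op0 : is_weyl_op (fun _ _ => 0).
Proof. by exists [::] => // f i; rewrite /wshift_sum big_nil. Qed.

Lemma is_weyl_opD T U : is_weyl_op T -> is_weyl_op U ->
  is_weyl_op (fun f i => T f i + U f i).
Proof.
case=> M admM TE [M' admM' UE]; exists (M ++ M') => [m|f i].
  by rewrite mem_cat => /orP [/admM|/admM'].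
by rewrite TE UE /wshift_sum big_cat.
Qed.

Lemma is_weyl_opZ c T : is_weyl_op T -> is_weyl_op (fun f i => c * T f i).
Proof.
case=> M admM TE; exists [seq (m.1, c *: m.2) | m <- M] => [x|f i].
  case/mapP => m /admM adm_m -> l /adm_m.
  by rewrite shiftpZ -mul_polyC; apply: dvdp_mull.
rewrite TE /wshift_sum big_map mulr_sumr; apply: eq_bigr => m _.
by rewrite hornerZ mulrA.
Qed.

Definition comp_terms (M M' : seq (int * {poly k})) :=
  [seq (m.1 + m'.1, m.2 * shiftp (- m.1) m'.2) | m <- M, m' <- M'].

Lemma wshift_sum_comp M M' f i :
  wshift_sum M (wshift_sum M' f) i = wshift_sum (comp_terms M M') f i.
Proof.
rewrite /wshift_sum /comp_terms big_allpairs_dep; apply: eq_bigr => m _ /=.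
rewrite mulr_sumr; apply: eq_bigr => m' _.
by rewrite hornerM horner_shiftp_pt opprK !mulrA addrA.
Qed.

Lemma admissible_comp M M' :
  admissible M -> admissible M' -> admissible (comp_terms M M').
Proof.
move=> admM admM' _ /allpairsP [[m m'] [/= mM m'M' ->]] l /andP [l_ge0 l_lt].
rewrite shiftpM; case: (ltP l m.1) => [l_lt_m|m_le_l].
  by apply: dvdp_mulr; apply: admM; rewrite ?l_ge0.
apply: dvdp_mull; rewrite shiftp_add; apply: admM' => //.
by rewrite subr_ge0 m_le_l /= ltrBlDl.
Qed.

Lemma is_weyl_op_comp T U : is_weyl_op T -> is_weyl_op U ->
  is_weyl_op (fun f => T (U f)).
Proof.
case=> M admM TE [M' admM' UE]; exists (comp_terms M M').
  exact: admissible_comp.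
move=> f i; rewrite -wshift_sum_comp TE; congr (wshift_sum _ _ _).
by apply: funext => j; rewrite UE.
Qed.

Lemma weyl_op_additive T f g i : is_weyl_op T ->
  T (fun j => f j + g j) i = T f i + T g i.
Proof.
case=> M _ TE; rewrite !TE /wshift_sum -big_split.
by apply: eq_bigr => m _; rewrite mulrDr.
Qed.

Lemma weyl_op_scalable T c f i : is_weyl_op T -> T (fun j => c * f j) i = c * T f i.
Proof.
case=> M _ TE; rewrite !TE /wshift_sum mulr_sumr.
by apply: eq_bigr => m _; rewrite mulrCA.
Qed.

Lemma weyl_op_coef T d : is_weyl_op T -> exists p,
  (forall i, p.[pt i] = T (delta (i + d)) i) /\
  (forall l : int, 0 <= l < d -> a %| shiftp l p).
Proof.
case=> M admM TE; exists (\sum_(m <- M | m.1 == d) m.2); split=> [i|l l_range].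
  rewrite TE horner_sum big_mkcond; apply: eq_bigr => m _.
  by rewrite /delta (inj_eq (addrI i)); case: eqP; rewrite ?mulr1 ?mulr0.
rewrite shiftp_sum big_seq_cond.
apply: (big_ind (fun q => a %| q)) => [||m /andP [mM /eqP md]].
- exact: dvdp0.
- exact: dvdp_add.
- by apply: (admM m mM); rewrite md.
Qed.

(* Conjugation by f |-> (i |-> w^i f i); it realises theta_w on the model. *)
Definition twist (w : k) (T : V -> V) : V -> V :=
  fun f i => w ^ i * T (fun j => w ^ (- j) * f j) i.

Lemma expfz_shift (w : k) i d : w != 0 -> w ^ i * w ^ (- (i + d)) = w ^ (- d).
Proof. by move=> w_neq0; rewrite -expfzDr // opprD addrA subrr add0r. Qed.

Lemma is_weyl_op_twist w T : w != 0 -> is_weyl_op T -> is_weyl_op (twist w T).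
Proof.
move=> w_neq0 [M admM TE]; exists [seq (m.1, w ^ (- m.1) *: m.2) | m <- M] => [x|f i].
  case/mapP => m /admM adm_m -> l /adm_m.
  by rewrite shiftpZ -mul_polyC; apply: dvdp_mull.
rewrite /twist TE /wshift_sum big_map mulr_sumr; apply: eq_bigr => m _ /=.
by rewrite hornerZ -(expfz_shift i m.1 w_neq0); ring.
Qed.

Record weyl_op := WeylOp { wop : V -> V; wopP : is_weyl_op wop }.

HB.instance Definition _ := gen_eqMixin weyl_op.
HB.instance Definition _ := gen_choiceMixin weyl_op.

Lemma weyl_opE (u v : weyl_op) : (forall f i, wop u f i = wop v f i) -> u = v.
Proof.
case: u v => [T TP] [U UP] /= TU.
have E : T = U by apply: funext => f; apply: funext => i; apply: TU.
by subst U; congr WeylOp; apply: Prop_irrelevance.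
Qed.

Definition weyl_zero := WeylOp is_weyl_op0.
Definition weyl_add (u v : weyl_op) := WeylOp (is_weyl_opD (wopP u) (wopP v)).
Definition weyl_opp (u : weyl_op) := WeylOp (is_weyl_opZ (-1) (wopP u)).

Lemma weyl_addA : associative weyl_add.
Proof. by move=> u v w; apply: weyl_opE => f i /=; rewrite addrA. Qed.
Lemma weyl_addC : commutative weyl_add.
Proof. by move=> u v; apply: weyl_opE => f i /=; rewrite addrC. Qed.
Lemma weyl_add0 : left_id weyl_zero weyl_add.
Proof. by move=> u; apply: weyl_opE => f i /=; rewrite add0r. Qed.
Lemma weyl_addN : left_inverse weyl_zero weyl_opp weyl_add.
Proof. by move=> u; apply: weyl_opE => f i /=; rewrite mulN1r addNr. Qed.

HB.instance Definition _ :=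
  GRing.isZmodule.Build weyl_op weyl_addA weyl_addC weyl_add0 weyl_addN.

Definition polyW p := WeylOp (is_weyl_op_wshift_npos p (lexx 0)).
Definition weyl_mul (u v : weyl_op) := WeylOp (is_weyl_op_comp (wopP u) (wopP v)).

Lemma wop_polyW p f i : wop (polyW p) f i = p.[pt i] * f i.
Proof. by rewrite /= /wshift addr0. Qed.

Lemma weyl_mulA : associative weyl_mul.
Proof. by move=> u v w; apply: weyl_opE. Qed.
Lemma weyl_mul1 : left_id (polyW 1) weyl_mul.
Proof. by move=> u; apply: weyl_opE => f i; rewrite /= /wshift hornerC mul1r addr0. Qed.
Lemma weyl_mulr1 : right_id (polyW 1) weyl_mul.
Proof.
move=> u; apply: weyl_opE => f i /=; congr (wop u _ i).
by apply: funext => j; rewrite /wshift hornerC mul1r addr0.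
Qed.
Lemma weyl_mulDl : left_distributive weyl_mul weyl_add.
Proof. by move=> u v w; apply: weyl_opE. Qed.
Lemma weyl_mulDr : right_distributive weyl_mul weyl_add.
Proof.
by move=> u v w; apply: weyl_opE => f i /=; exact: weyl_op_additive (wopP u).
Qed.
Lemma weyl_one_neq0 : polyW 1 != weyl_zero.
Proof.
apply/eqP => /(congr1 (fun u => wop u (delta 0) 0)).
by rewrite wop_polyW hornerC mul1r /delta eqxx => /eqP; rewrite oner_eq0.
Qed.

HB.instance Definition _ := GRing.Zmodule_isNzRing.Build weyl_op
  weyl_mulA weyl_mul1 weyl_mulr1 weyl_mulDl weyl_mulDr weyl_one_neq0.

Definition weyl_scale (c : k) (u : weyl_op) := WeylOp (is_weyl_opZ c (wopP u)).

Lemma weyl_scaleA c d u : weyl_scale c (weyl_scale d u) = weyl_scale (c * d) u.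
Proof. by apply: weyl_opE => f i /=; rewrite mulrA. Qed.
Lemma weyl_scale1 : left_id 1 weyl_scale.
Proof. by move=> u; apply: weyl_opE => f i /=; rewrite mul1r. Qed.
Lemma weyl_scaleDr : right_distributive weyl_scale +%R.
Proof. by move=> c u v; apply: weyl_opE => f i /=; rewrite mulrDr. Qed.
Lemma weyl_scaleDl u : {morph weyl_scale^~ u : c d / c + d}.
Proof. by move=> c d; apply: weyl_opE => f i /=; rewrite mulrDl. Qed.

HB.instance Definition _ := GRing.Zmodule_isLmodule.Build k weyl_op
  weyl_scaleA weyl_scale1 weyl_scaleDr weyl_scaleDl.

Lemma weyl_scaleAl c (u v : weyl_op) : c *: (u * v) = (c *: u) * v.
Proof. by apply: weyl_opE. Qed.

HB.instance Definition _ := GRing.Lmodule_isLalgebra.Build k weyl_op weyl_scaleAl.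

Lemma weyl_scaleAr c (u v : weyl_op) : c *: (u * v) = u * (c *: v).
Proof. by apply: weyl_opE => f i /=; exact/esym/weyl_op_scalable/wopP. Qed.

HB.instance Definition _ := GRing.Lalgebra_isAlgebra.Build k weyl_op weyl_scaleAr.

Definition hW := polyW 'X.

Lemma admissible_y (l : int) : 0 <= l < 1 -> a %| shiftp l a.
Proof.
case/andP => l_ge0 l_lt1; have -> : l = 0 by lia.
by rewrite shiftp_id.
Qed.

Definition xW := WeylOp (is_weyl_op_wshift_npos 1 (lerN10 _)).
Definition yW := WeylOp (is_weyl_op_wshift admissible_y).

Lemma polyA_polyW p : polyA hW p = polyW p.
Proof.
elim/poly_ind: p => [|p c IH].
  by apply: weyl_opE => f i; rewrite /polyA rmorph0 wop_polyW horner0 mul0r.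
rewrite /polyA rmorphD rmorphM /= horner_algX horner_algC -/(polyA hW p) IH.
apply: weyl_opE => f i; rewrite wop_polyW /= /wshift !addr0.
by rewrite hornerD hornerMX !hornerC hornerX /pt; ring.
Qed.

Lemma gwa_rel_weyl : gwa_rel h0 a hW xW yW.
Proof.
split=> [||r|r]; rewrite !polyA_polyW; apply: weyl_opE => f i /=;
  rewrite !wshift_comp ?sigma_hE.
- by rewrite shiftpC mulr1 addrN.
- by rewrite opprK mul1r addNr.
- by rewrite opprK shiftpC mul1r mulr1 addr0 add0r.
- by rewrite shiftp_add addNr oppr0 !shiftp_id addr0 add0r mulrC.
Qed.

Lemma wop_xWn m : wop (xW ^+ m) = wshift (- m%:Z) 1.
Proof.
elim: m => [|m IH]; first by rewrite expr0 oppr0.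
apply: funext => f; rewrite exprS /= IH wshift_comp shiftpC mulr1.
by rewrite intS opprD.
Qed.

Fixpoint ypow (m : nat) : {poly k} :=
  if m is m'.+1 then a * shiftp (-1) (ypow m') else 1.

Lemma wop_yWn m : wop (yW ^+ m) = wshift m (ypow m).
Proof.
elim: m => [|m IH]; first by rewrite expr0.
by apply: funext => f; rewrite exprS /= IH wshift_comp -intS.
Qed.

Lemma ypow_dvd m (l : nat) : (l < m)%N -> a %| shiftp l (ypow m).
Proof.
elim: m l => [|m IH] [|l] //= lt_lm; rewrite shiftpM.
  by rewrite shiftp_id dvdp_mulr.
by rewrite shiftp_add (_ : l.+1%:Z + -1 = l) ?dvdp_mull ?IH // intS addrC addKr.
Qed.

(** * The trace on the model *)

Lemma wop_coef (u : weyl_op) d : exists p,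
  (forall i, p.[pt i] = wop u (delta (i + d)) i) /\
  (forall l : int, 0 <= l < d -> a %| shiftp l p).
Proof. exact: weyl_op_coef (wopP u). Qed.

Definition coefW u d := sval (cid (wop_coef u d)).

Lemma coefWE u d i : (coefW u d).[pt i] = wop u (delta (i + d)) i.
Proof. exact: (svalP (cid (wop_coef u d))).1. Qed.

Lemma coefW_dvd u d (l : int) : 0 <= l < d -> a %| shiftp l (coefW u d).
Proof. exact: (svalP (cid (wop_coef u d))).2. Qed.

Lemma coefW_eq u d p : (forall i, p.[pt i] = wop u (delta (i + d)) i) -> coefW u d = p.
Proof.
move=> pE; apply/eqP; rewrite -subr_eq0; apply/eqP.
apply: (poly_progression_eq0 h0_neq0) => n.
by rewrite hornerD hornerN -[n%:R * h0]/(pt n) coefWE pE subrr.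
Qed.

Lemma coefW_wshift_mul u v d p :
  wop v = wshift d p -> coefW (v * u) 0 = p * shiftp (- d) (coefW u (- d)).
Proof.
move=> vE; apply: coefW_eq => i.
by rewrite /= vE /wshift hornerM horner_shiftp_pt opprK coefWE addrK addr0.
Qed.

Lemma coefW_mul_wshift u v d p :
  wop v = wshift d p -> coefW (u * v) 0 = coefW u (- d) * shiftp d p.
Proof.
move=> vE; apply: coefW_eq => i; rewrite /= vE addr0.
have -> : wshift d p (delta i) = (fun j => p.[pt (i - d)] * delta (i - d) j).
  apply: funext => j; rewrite /wshift /delta.
  case: (eqVneq j (i - d)) => [->|ne]; first by rewrite subrK eqxx.
  suff /negbTE -> : j + d != i by rewrite !mulr0.
  by apply: contra ne => /eqP <-; rewrite addrK.
rewrite weyl_op_scalable; last exact: wopP.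
by rewrite hornerM horner_shiftp_pt coefWE mulrC.
Qed.

Definition wtrace u := ptrace (coefW u 0).

Lemma wtraceD u v : wtrace (u + v) = wtrace u + wtrace v.
Proof.
rewrite /wtrace -ptraceD; congr ptrace.
by apply: coefW_eq => i; rewrite hornerD !coefWE.
Qed.

Lemma wtraceZ c u : wtrace (c *: u) = c * wtrace u.
Proof.
rewrite /wtrace -ptraceZ; congr ptrace.
by apply: coefW_eq => i; rewrite hornerZ !coefWE.
Qed.

Lemma wtrace_polyW p : wtrace (polyW p) = ptrace p.
Proof.
congr ptrace; apply: coefW_eq => i.
by rewrite wop_polyW /delta addr0 eqxx mulr1.
Qed.

Lemma wtrace_xWn_comm m u : wtrace (xW ^+ m * u) = wtrace (u * xW ^+ m).
Proof.
rewrite /wtrace (coefW_wshift_mul _ (wop_xWn m)) (coefW_mul_wshift _ (wop_xWn m)).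
rewrite opprK mul1r shiftpC mulr1 ptrace_shiftp // => l lt_lm.
by apply: coefW_dvd; rewrite ltz_nat lt_lm.
Qed.

Lemma wtrace_yWn_comm m u : wtrace (yW ^+ m * u) = wtrace (u * yW ^+ m).
Proof.
rewrite /wtrace (coefW_wshift_mul _ (wop_yWn m)) (coefW_mul_wshift _ (wop_yWn m)).
set G := ypow m * _.
have -> : coefW u (- m%:Z) * shiftp m (ypow m) = shiftp m G.
  by rewrite /G shiftpM shiftp_add addrN shiftp_id mulrC.
rewrite ptrace_shiftp // => l lt_lm.
by rewrite /G shiftpM dvdp_mulr ?ypow_dvd.
Qed.

Section Twist.
Variable w : k.
Hypothesis w_neq0 : w != 0.

Definition twistW (u : weyl_op) := WeylOp (is_weyl_op_twist w_neq0 (wopP u)).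

Lemma twistW_hom : alg_hom twistW.
Proof.
split=> [|u v|u v|c u]; apply: weyl_opE => f i; rewrite /= /twist.
- by rewrite /wshift hornerC !mul1r mulrA expfz_shift // oppr0 expr0z mul1r addr0.
- by rewrite mulrDr.
- congr (_ * wop u _ i); apply: funext => j.
  by rewrite mulrA -expfzDr // addNr expr0z mul1r.
- by rewrite mulrCA.
Qed.

Lemma twistW_h : twistW hW = hW.
Proof.
apply: weyl_opE => f i; rewrite /= /twist /wshift mulrCA (mulrA (w ^ i)).
by rewrite expfz_shift // oppr0 expr0z mul1r.
Qed.

Lemma twistW_x : twistW xW = w *: xW.
Proof.
apply: weyl_opE => f i; rewrite /= /twist /wshift mulrCA (mulrA (w ^ i)).
by rewrite expfz_shift // opprK expr1z mulrCA.
Qed.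

Lemma twistW_y : twistW yW = w^-1 *: yW.
Proof.
apply: weyl_opE => f i; rewrite /= /twist /wshift mulrCA (mulrA (w ^ i)).
by rewrite expfz_shift // exprN1 mulrCA.
Qed.

Lemma wtrace_twistW u : wtrace (twistW u) = wtrace u.
Proof.
congr ptrace; apply: coefW_eq => i; rewrite /= /twist addr0.
have -> : (fun j => w ^ (- j) * delta i j) = (fun j => w ^ (- i) * delta i j).
  by apply: funext => j; rewrite /delta; case: eqP => [->|_]; rewrite ?mulr0.
rewrite weyl_op_scalable; last exact: wopP.
by rewrite mulrA -expfzDr // subrr expr0z mul1r coefWE addr0.
Qed.

End Twist.

Lemma gwa_gen_wtrace (A : algType k) (hA xA yA : A) (f : A -> weyl_op) :
  alg_hom f -> f hA = hW -> f xA = xW -> f yA = yW ->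
  (forall g1 g2 : A -> weyl_op, alg_hom g1 -> alg_hom g2 ->
     g1 hA = g2 hA -> g1 xA = g2 xA -> g1 yA = g2 yA -> g1 =1 g2) ->
  forall s, gwa_gen hA xA yA s -> forall b, wtrace (f (s b)) = wtrace (f b).
Proof.
move=> fhom fh fx fy f_uniq s; have [_ fD fM fZ] := fhom.
have phiD : {morph wtrace \o f : u v / u + v} by move=> u v /=; rewrite fD wtraceD.
have phiZ c u : (wtrace \o f) (c *: u) = c * (wtrace \o f) u.
  by rewrite /= fZ wtraceZ.
case=> [[w [w_neq0 shom sx sy sh]]|[lam [m [_ [s_exp|s_exp]]]]].
- have fsE : f \o s =1 twistW w_neq0 \o f.
    apply: f_uniq => /=; rewrite ?sh ?sx ?sy ?fZ ?fh ?fx ?fy.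
    + exact: alg_hom_comp.
    + exact: alg_hom_comp (twistW_hom _) fhom.
    + by rewrite twistW_h.
    + by rewrite twistW_x.
    + by rewrite twistW_y.
  by move=> b; rewrite -[f (s b)]/((f \o s) b) fsE /= wtrace_twistW.
- apply: (exp_ad_inv phiD phiZ _ s_exp) => b /=.
  by rewrite !fM alg_homX // fx wtrace_xWn_comm.
- apply: (exp_ad_inv phiD phiZ _ s_exp) => b /=.
  by rewrite !fM alg_homX // fy wtrace_yWn_comm.
Qed.

Lemma gwa_invariant_form (A : algType k) (hA xA yA : A) :
  is_gwa h0 a hA xA yA -> exists phi : A -> k,
    (forall g, in_gen_group (gwa_gen hA xA yA) g -> forall b, phi (g b) = phi b) /\
    (forall p, phi (polyA hA p) = ptrace p).
Proof.
case=> _ /(_ _ hW xW yW gwa_rel_weyl) [[f [fhom fh fx fy]] f_uniq].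
exists (wtrace \o f); split=> [|p /=].
  by apply: in_gen_group_inv; apply: gwa_gen_wtrace.
by rewrite alg_hom_polyA // fh polyA_polyW wtrace_polyW.
Qed.

End TraceForm.
End Difference.

Unset Implicit Arguments.

Theorem mainTheorem7 (k : fieldType) (Hchar : [pchar k] =i pred0)
  (h0 : k) (Hh0 : h0 != 0) (a : {poly k}) (n : nat)
  (Hn : (size a).-1 = n) (Hn2 : (2 < n)%N) (rho : k)
  (Hrefl : a \Po (rho%:P - 'X) = (-1) ^+ n *: a)
  (A : algType k) (hA xA yA : A) (HA : is_gwa h0 a hA xA yA)
  (Omega : A -> A) (HOm : alg_hom Omega) (HObij : bijective Omega)
  (HOx : Omega xA = yA) (HOy : Omega yA = (-1) ^+ n *: xA)
  (HOh : Omega hA = polyA hA ((h0 + rho)%:P - 'X)) :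
  ~ (exists g : A -> A, in_gen_group (gwa_gen hA xA yA) g /\ g =1 Omega).
Proof.
move=> [g [g_gen gE]].
have size_a : (3 < size a)%N by lia.
have [phi [phi_inv phi_polyA]] := gwa_invariant_form Hchar Hh0 size_a HA.
have := phi_inv g g_gen hA; rewrite gE HOh phi_polyA -[hA in phi hA](horner_algX hA).
by rewrite -/(polyA hA 'X) phi_polyA; apply/eqP/ptrace_CsubX_neq.
Qed.
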